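(* Let $\mathsf{SUPERINV}$ be the verification condition provider given by $\mathsf{SUPERINV}(\mathtt{while}(\varphi)\{C_{\mathrm{body}}\}[I],f)=\mathsf{true}$ iff $[\varphi]\cdot\mathrm{dwp}^*[\![C_{\mathrm{body}}]\!](I)+[\neg\varphi]\cdot f\le I$. Then $\mathsf{SUPERINV}$ yields upper bounds for $\mathrm{dwp}$, and $\mathrm{trans}^{\preceq}_{\mathrm{dwp}}$ preserves $\mathsf{SUPERINV}$.
   Context: States: fix a countably infinite set of program variables with values in $\mathbb{Q}_{\ge 0}$; a state is a map $\sigma$ from variables to $\mathbb{Q}_{\ge0}$ which is $0$ for all but finitely many variables; $\mathsf{States}$ is the set of states. A predicate is a map $\varphi:\mathsf{States}\to\{\mathsf{true},\mathsf{false}\}$; $\varphi\models\psi$ means every state satisfying $\varphi$ satisfies $\psi$; $\models\varphi$ means $\varphi$ holds in every state; $\varphi\Rightarrow\psi$ is the usual implication. Expectations: $\mathbb{E}$ is the set of maps $\mathsf{States}\to[0,\infty]$, ordered pointwise; $+,\cdot$ pointwise with $0\cdot\infty=0$; $\sqcap$ pointwise min; $[\varphi]$ Iverson bracket; $(\varphi\to g)(\sigma)=g(\sigma)$ if $\sigma\models\varphi$, else $\infty$; $f[x/E](\sigma)=f(\sigma[x\mapsto E(\sigma)])$. Programs of $\mathsf{pGCL}$: $C ::= \mathtt{skip} \mid x:=E \mid C;C \mid \mathtt{if}\ \varphi_1\to C\ \square\ \varphi_2\to C \mid \{C\}[p]\{C\} \mid \mathtt{while}(\varphi)\{C\}[I]$,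 where $E:\mathsf{States}\to\mathbb{Q}_{\ge0}$, $p:\mathsf{States}\to[0,1]$, in every guarded choice $\varphi_1\vee\varphi_2$ is valid, and every loop carries an invariant annotation $I\in\mathbb{E}$. Demonic weakest preexpectation: $\mathrm{dwp}[\![\mathtt{skip}]\!](f)=f$; $\mathrm{dwp}[\![x:=E]\!](f)=f[x/E]$; $\mathrm{dwp}[\![C_1;C_2]\!](f)=\mathrm{dwp}[\![C_1]\!](\mathrm{dwp}[\![C_2]\!](f))$; $\mathrm{dwp}[\![\mathtt{if}\ \varphi_1\to C_1\ \square\ \varphi_2\to C_2]\!](f)=(\varphi_1\to\mathrm{dwp}[\![C_1]\!](f))\sqcap(\varphi_2\to\mathrm{dwp}[\![C_2]\!](f))$; $\mathrm{dwp}[\![\{C_1\}[p]\{C_2\}]\!](f)=p\cdot\mathrm{dwp}[\![C_1]\!](f)+(1-p)\cdot\mathrm{dwp}[\![C_2]\!](f)$; loops: least fixpoint of $g\mapsto[\neg\varphi]\cdot f+[\varphi]\cdot\mathrm{dwp}[\![C']\!](g)$. The auxiliary $\mathrm{dwp}^*$ follows the same rules except $\mathrm{dwp}^*[\![\mathtt{while}(\varphi)\{C'\}[I]]\!](f)=I$. Implementation relation $\multimap$: smallest partial order on $\mathsf{pGCL}$ closed under: if $C_1'\multimap C_1$, $C_2'\multimap C_2$ then $C_1';C_2'\multimap C_1;C_2$ and $\{C_1'\}[p]\{C_2'\}\multimap\{C_1\}[p]\{C_2\}$; if moreover $\varphi_1'\models\varphi_1$, $\varphi_2'\models\varphi_2$,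 $\models\varphi_1'\vee\varphi_2'$ then $\mathtt{if}\ \varphi_1'\to C_1'\ \square\ \varphi_2'\to C_2'\multimap\mathtt{if}\ \varphi_1\to C_1\ \square\ \varphi_2\to C_2$; if $C'\multimap C$ then $\mathtt{while}(\varphi)\{C'\}\multimap\mathtt{while}(\varphi)\{C\}$. Verification conditions: a provider $\mathfrak{C}$ maps annotated loops and $f\in\mathbb{E}$ to truth values; $\mathrm{vc}^{\mathfrak{C},\mathrm{dwp}}[\![C]\!](f)$: $\mathsf{true}$ for $\mathtt{skip}$ and assignments; $\mathrm{vc}[\![C_1]\!](\mathrm{dwp}^*[\![C_2]\!](f))\wedge\mathrm{vc}[\![C_2]\!](f)$ for $C_1;C_2$; $\mathrm{vc}[\![C_1]\!](f)\wedge\mathrm{vc}[\![C_2]\!](f)$ for guarded and probabilistic choices; $\mathfrak{C}(\mathtt{while}(\varphi)\{C'\}[I],f)\wedge\mathrm{vc}[\![C']\!](I)$ for loops. $\mathfrak{C}$ yields upper bounds for $\mathrm{dwp}$ if for all $C\in\mathsf{pGCL}$, $f\in\mathbb{E}$, $\mathrm{vc}^{\mathfrak{C},\mathrm{dwp}}[\![C]\!](f)$ implies $\mathrm{dwp}[\![C]\!](f)\le\mathrm{dwp}^*[\![C]\!](f)$. Transformer $\mathrm{trans}^{\preceq}_{\mathrm{dwp}}$ (with $f\preceq g$ the predicate true at $\sigma$ iff $f(\sigma)\le g(\sigma)$): $\mathtt{skip}$, assignments unchanged; $C_1;C_2\mapsto \mathrm{trans}[\![C_1]\!](\mathrm{dwp}^*[\![C_2]\!](f));\mathrm{trans}[\![C_2]\!](f)$;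 $\mathtt{if}\ \varphi_1\to C_1\ \square\ \varphi_2\to C_2\mapsto\mathtt{if}\ \psi_1\to\mathrm{trans}[\![C_1]\!](f)\ \square\ \psi_2\to\mathrm{trans}[\![C_2]\!](f)$ with $\psi_1=\varphi_1\wedge(\varphi_2\Rightarrow\mathrm{dwp}^*[\![C_1]\!](f)\preceq\mathrm{dwp}^*[\![C_2]\!](f))$, $\psi_2=\varphi_2\wedge(\varphi_1\Rightarrow\mathrm{dwp}^*[\![C_2]\!](f)\preceq\mathrm{dwp}^*[\![C_1]\!](f))$; probabilistic choice transformed branchwise; $\mathtt{while}(\varphi)\{C'\}[I]\mapsto\mathtt{while}(\varphi)\{\mathrm{trans}[\![C']\!](I)\}[I]$. $\mathrm{trans}^{\preceq}_{\mathrm{dwp}}$ preserves $\mathfrak{C}$ if for all $C,C'$, $f$: $\mathrm{vc}^{\mathfrak{C},\mathrm{dwp}}[\![C]\!](f)$ and $C'\multimap\mathrm{trans}^{\preceq}_{\mathrm{dwp}}[\![C]\!](f)$ imply $\mathrm{vc}^{\mathfrak{C},\mathrm{dwp}}[\![C']\!](f)$. *)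

From mathcomp Require Import all_boot all_order all_algebra.
From mathcomp Require Import all_classical all_reals.
From mathcomp Require Import ereal.
Set Implicit Arguments. Unset Strict Implicit. Unset Printing Implicit Defensive.
Import Order.TTheory GRing.Theory Num.Theory.
Local Open Scope ring_scope.

(* Program variables are indexed by nat (a countably infinite set). *)
Definition qnn := {q : rat | 0 <= q}.

Definition fin_supp (s : nat -> qnn) : Prop :=
  exists N : nat, forall x : nat, (N <= x)%N -> val (s x) = 0.

Definition State := {s : nat -> qnn | fin_supp s}.

Definition upd_fun (s : nat -> qnn) (x : nat) (v : qnn) : nat -> qnn :=
  fun y => if y == x then v else s y.

Lemma upd_fin_supp (s : State) (x : nat) (v : qnn) :
  fin_supp (upd_fun (proj1_sig s) x v).
Proof.
case: s => s [N HN] /=; exists (maxn N x.+1) => y Hy.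
rewrite /upd_fun; case: eqP => [Hyx|_].
  by subst y; move: Hy; rewrite geq_max ltnn andbF.
by apply: HN; move: Hy; rewrite geq_max => /andP[].
Qed.

Definition upd (s : State) (x : nat) (v : qnn) : State :=
  exist _ (upd_fun (proj1_sig s) x v) (upd_fin_supp s x v).

Definition pred_st := State -> bool.

Section Expect.
Variable R : realType.
Local Open Scope ereal_scope.

(* Expectations: maps States -> [0, oo]; we use \bar R together with
   the nonnegativity predicate [nonneg]. *)
Definition expect := State -> \bar R.
Definition nonneg (f : expect) : Prop := forall s, 0 <= f s.
Definition leE (f g : expect) : Prop := forall s, f s <= g s.

Definition iverson (b : bool) : \bar R := (if b then 1%R else 0%R)%:E.

Definition guardE (b : bool) (x : \bar R) : \bar R := if b then x else +oo.

(* Least fixpoint (Knaster-Tarski) in the complete lattice of expectations: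
   pointwise infimum of all prefixed points. *)
Definition lfp (Phi : expect -> expect) : expect :=
  fun s => ereal_inf [set g s | g in [set g : expect | nonneg g /\ leE (Phi g) g]].

Inductive pGCL : Type :=
| Skip : pGCL
| Assign : nat -> (State -> qnn) -> pGCL
| Seq : pGCL -> pGCL -> pGCL
| If : pred_st -> pGCL -> pred_st -> pGCL -> pGCL
| Prob : pGCL -> (State -> R) -> pGCL -> pGCL
| While : pred_st -> pGCL -> expect -> pGCL.

Fixpoint wf (C : pGCL) : Prop :=
  match C with
  | Skip => True
  | Assign _ _ => True
  | Seq C1 C2 => wf C1 /\ wf C2
  | If p1 C1 p2 C2 => (forall s, p1 s || p2 s) /\ wf C1 /\ wf C2
  | Prob C1 p C2 => (forall s, (0 <= p s <= 1)%R) /\ wf C1 /\ wf C2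
  | While _ C Inv => nonneg Inv /\ wf C
  end.

Definition prob_comb (p : State -> R) (a b : expect) : expect :=
  fun s => (p s)%:E * a s + (1 - p s)%:E * b s.

Fixpoint dwp (C : pGCL) (f : expect) : expect :=
  match C with
  | Skip => f
  | Assign x E => fun s => f (upd s x (E s))
  | Seq C1 C2 => dwp C1 (dwp C2 f)
  | If p1 C1 p2 C2 => fun s =>
      Order.min (guardE (p1 s) (dwp C1 f s)) (guardE (p2 s) (dwp C2 f s))
  | Prob C1 p C2 => prob_comb p (dwp C1 f) (dwp C2 f)
  | While phi C' _ =>
      lfp (fun g s => iverson (~~ phi s) * f s + iverson (phi s) * dwp C' g s)
  end.

Fixpoint dwpS (C : pGCL) (f : expect) : expect :=
  match C with
  | Skip => f
  | Assign x E => fun s => f (upd s x (E s))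
  | Seq C1 C2 => dwpS C1 (dwpS C2 f)
  | If p1 C1 p2 C2 => fun s =>
      Order.min (guardE (p1 s) (dwpS C1 f s)) (guardE (p2 s) (dwpS C2 f s))
  | Prob C1 p C2 => prob_comb p (dwpS C1 f) (dwpS C2 f)
  | While _ _ Inv => Inv
  end.

Inductive impl : pGCL -> pGCL -> Prop :=
| impl_refl C : impl C C
| impl_trans C1 C2 C3 : impl C1 C2 -> impl C2 C3 -> impl C1 C3
| impl_seq C1' C2' C1 C2 :
    impl C1' C1 -> impl C2' C2 -> impl (Seq C1' C2') (Seq C1 C2)
| impl_prob C1' C2' C1 C2 p :
    impl C1' C1 -> impl C2' C2 -> impl (Prob C1' p C2') (Prob C1 p C2)
| impl_if C1' C2' C1 C2 (p1' p2' p1 p2 : pred_st) :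
    impl C1' C1 -> impl C2' C2 ->
    (forall s, p1' s -> p1 s) -> (forall s, p2' s -> p2 s) ->
    (forall s, p1' s || p2' s) ->
    impl (If p1' C1' p2' C2') (If p1 C1 p2 C2)
| impl_while phi C' C Inv :
    impl C' C -> impl (While phi C' Inv) (While phi C Inv).

(* A provider maps an annotated loop while(phi){C}[Inv] and f to a truth value. *)
Definition provider := pred_st -> pGCL -> expect -> expect -> Prop.

Fixpoint vc (P : provider) (C : pGCL) (f : expect) : Prop :=
  match C with
  | Skip => True
  | Assign _ _ => True
  | Seq C1 C2 => vc P C1 (dwpS C2 f) /\ vc P C2 f
  | If _ C1 _ C2 => vc P C1 f /\ vc P C2 f
  | Prob C1 _ C2 => vc P C1 f /\ vc P C2 f
  | While phi C' Inv => P phi C' Inv f /\ vc P C' Inv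
  end.

Definition yields_upper_bounds (P : provider) : Prop :=
  forall (C : pGCL) (f : expect), wf C -> nonneg f ->
    vc P C f -> leE (dwp C f) (dwpS C f).

Fixpoint trans (C : pGCL) (f : expect) : pGCL :=
  match C with
  | Skip => Skip
  | Assign x E => Assign x E
  | Seq C1 C2 => Seq (trans C1 (dwpS C2 f)) (trans C2 f)
  | If p1 C1 p2 C2 =>
      If (fun s => p1 s && (p2 s ==> (dwpS C1 f s <= dwpS C2 f s)))
         (trans C1 f)
         (fun s => p2 s && (p1 s ==> (dwpS C2 f s <= dwpS C1 f s)))
         (trans C2 f)
  | Prob C1 p C2 => Prob (trans C1 f) p (trans C2 f)
  | While phi C' Inv => While phi (trans C' Inv) Inv
  end.

Definition preserves (P : provider) : Prop :=
  forall (C C' : pGCL) (f : expect), wf C -> wf C' -> nonneg f ->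
    vc P C f -> impl C' (trans C f) -> vc P C' f.

Definition SUPERINV : provider := fun phi Cb Inv f =>
  leE (fun s => iverson (phi s) * dwpS Cb Inv s + iverson (~~ phi s) * f s) Inv.

End Expect.

From mathcomp Require Import all_boot all_order all_algebra.
From mathcomp Require Import all_classical all_reals.
From mathcomp Require Import ereal.
Import Order.TTheory GRing.Theory Num.Theory.

(** A SUPERINV invariant [I] is a prefixed point of the characteristic
    function of its loop (once the body is bounded by [dwp^*]), so Park
    induction puts the least fixpoint below [I]; since every [dwp] is monotone,
    induction on the program gives [dwp <= dwp^*].
    For preservation, [trans] only strengthens guards so that a branch can be
    taken only if its [dwp^*] is the smaller one.  Any implementation of the
    transformed program keeps these stronger guards and still covers every
    state, hence its [dwp^*] is below the original one; as verification
    conditions are antitone in the postexpectation, they survive. *)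

Section SuperInv.
Variable R : realType.
Local Open Scope ereal_scope.
Implicit Types (C : pGCL R) (f g : expect R) (x y : \bar R).

Lemma iversonMe (b : bool) x : iverson R b * x = if b then x else 0.
Proof. by case: b; rewrite /iverson ?mul1e ?mul0e. Qed.

Lemma lee_iversonM (b : bool) x y : x <= y -> iverson R b * x <= iverson R b * y.
Proof. by rewrite !iversonMe; case: b. Qed.

Lemma guardE_le (b : bool) x y : x <= y -> guardE b x <= guardE b y.
Proof. by case: b. Qed.

Lemma prob_comb_le (p : State -> R) (a b a' b' : expect R) s :
  (0 <= p s <= 1)%R -> a s <= a' s -> b s <= b' s ->
  prob_comb p a b s <= prob_comb p a' b' s.
Proof.
move=> /andP[p0 p1] ha hb; apply: leeD.
  by apply: lee_wpmul2l => //; rewrite lee_fin.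
by apply: lee_wpmul2l => //; rewrite lee_fin subr_ge0.
Qed.

Lemma dwpS_le C f g : wf C -> leE f g -> leE (dwpS C f) (dwpS C g).
Proof.
elim: C f g => [|x E|C1 IH1 C2 IH2|p1 C1 IH1 p2 C2 IH2|C1 IH1 p C2 IH2|phi C IH I]
  f g //=.
- by move=> _ fg s; apply: fg.
- by move=> [w1 w2] fg; apply: IH1 => //; apply: IH2.
- by move=> [_ [w1 w2]] fg s; apply: le_min2; apply: guardE_le; [apply: IH1|apply: IH2].
- by move=> [wp [w1 w2]] fg s; apply: prob_comb_le => //; [apply: IH1|apply: IH2].
- by move=> _ _ s.
Qed.

Lemma lfp_le (Phi : expect R -> expect R) (I : expect R) :
  nonneg I -> leE (Phi I) I -> leE (lfp Phi) I.
Proof. by move=> I0 PhiI s; apply: ereal_inf_lbound; exists I. Qed.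

Lemma lfp_le_lfp (Phi Psi : expect R -> expect R) :
  (forall g, leE (Phi g) (Psi g)) -> leE (lfp Phi) (lfp Psi).
Proof.
move=> PhiPsi s; apply: ereal_inf_le_tmp; apply: image_subset.
by move=> g /= [g0 Psig]; split=> // t; apply: le_trans (PhiPsi g t) (Psig t).
Qed.

Lemma dwp_le C f g : wf C -> leE f g -> leE (dwp C f) (dwp C g).
Proof.
elim: C f g => [|x E|C1 IH1 C2 IH2|p1 C1 IH1 p2 C2 IH2|C1 IH1 p C2 IH2|phi C IH I]
  f g //=.
- by move=> _ fg s; apply: fg.
- by move=> [w1 w2] fg; apply: IH1 => //; apply: IH2.
- by move=> [_ [w1 w2]] fg s; apply: le_min2; apply: guardE_le; [apply: IH1|apply: IH2].
- by move=> [wp [w1 w2]] fg s; apply: prob_comb_le => //; [apply: IH1|apply: IH2].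
- by move=> _ fg; apply: lfp_le_lfp => h s; apply: leeD => //; apply: lee_iversonM.
Qed.

Definition antitone_provider (P : provider R) : Prop :=
  forall phi Cb Inv f g, leE f g -> P phi Cb Inv g -> P phi Cb Inv f.

Lemma vc_antitone (P : provider R) C f g :
  antitone_provider P -> wf C -> leE f g -> vc P C g -> vc P C f.
Proof.
move=> Panti; elim: C f g
  => [|x E|C1 IH1 C2 IH2|p1 C1 IH1 p2 C2 IH2|C1 IH1 p C2 IH2|phi C IH I] f g //=.
- move=> [w1 w2] fg [v1 v2]; split; last exact: IH2 v2.
  by apply: IH1 v1 => //; apply: dwpS_le.
- by move=> [_ [w1 w2]] fg [v1 v2]; split; [apply: IH1 v1|apply: IH2 v2].
- by move=> [_ [w1 w2]] fg [v1 v2]; split; [apply: IH1 v1|apply: IH2 v2].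
- by move=> _ fg [v1 v2]; split=> //; apply: Panti v1.
Qed.

Lemma SUPERINV_antitone : antitone_provider (@SUPERINV R).
Proof.
move=> phi Cb I f g fg sup s; apply: le_trans (sup s).
by apply: leeD => //; apply: lee_iversonM.
Qed.

Lemma SUPERINV_upper_bounds : yields_upper_bounds (@SUPERINV R).
Proof.
move=> C f + _; elim: C f
  => [|x E|C1 IH1 C2 IH2|p1 C1 IH1 p2 C2 IH2|C1 IH1 p C2 IH2|phi C IH I] f //=.
- by move=> _ _ s.
- by move=> _ _ s.
- move=> [w1 w2] [v1 v2] s; apply: le_trans (IH1 _ w1 v1 s).
  by apply: dwp_le => // t; apply: IH2.
- by move=> [_ [w1 w2]] [v1 v2] s; apply: le_min2; apply: guardE_le;
    [apply: IH1|apply: IH2].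
- by move=> [wp [w1 w2]] [v1 v2] s; apply: prob_comb_le => //;
    [apply: IH1|apply: IH2].
- move=> [I0 w] [sup v] s; apply: lfp_le => // t; apply: le_trans (sup t).
  by rewrite addeC; apply: leeD => //; apply: lee_iversonM; apply: IH.
Qed.

(** A syntax-directed form of [impl], in which [impl_trans] is admissible;
    unlike [impl] it can be inverted along the structure of programs. *)
Fixpoint struct_impl (A B : pGCL R) : Prop :=
  match A, B with
  | Skip, Skip => True
  | Assign x E, Assign y F => x = y /\ E = F
  | Seq a1 a2, Seq b1 b2 => struct_impl a1 b1 /\ struct_impl a2 b2
  | If q1 a1 q2 a2, If p1 b1 p2 b2 =>
      [/\ struct_impl a1 b1, struct_impl a2 b2,
          forall s, q1 s -> p1 s & forall s, q2 s -> p2 s]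
  | Prob a1 p a2, Prob b1 p' b2 => [/\ p = p', struct_impl a1 b1 & struct_impl a2 b2]
  | While phi a Iv, While phi' b Iv' => [/\ phi = phi', Iv = Iv' & struct_impl a b]
  | _, _ => False
  end.

Lemma struct_impl_refl A : struct_impl A A.
Proof. by elim: A => //= *; split. Qed.

Lemma struct_impl_trans A B C : struct_impl A B -> struct_impl B C -> struct_impl A C.
Proof.
elim: A B C
  => [|x E|a1 IH1 a2 IH2|q1 a1 IH1 q2 a2 IH2|a1 IH1 p a2 IH2|phi a IH I]
     [|y F|b1 b2|r1 b1 r2 b2|b1 p' b2|phi' b I']
     [|z G|c1 c2|t1 c1 t2 c2|c1 p'' c2|phi'' c I''] //=.
- by move=> [-> ->] [-> ->].
- by move=> [h1 h2] [k1 k2]; split; [apply: IH1 k1|apply: IH2 k2].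
- move=> [h1 h2 h3 h4] [k1 k2 k3 k4]; split; [exact: IH1 k1|exact: IH2 k2| |].
  + by move=> s /h3; apply: k3.
  + by move=> s /h4; apply: k4.
- by move=> [-> h1 h2] [-> k1 k2]; split; [|apply: IH1 k1|apply: IH2 k2].
- by move=> [-> -> h] [-> -> k]; split=> //; apply: IH h k.
Qed.

Lemma impl_struct A B : impl A B -> struct_impl A B.
Proof.
elim=> //= [C|C1 C2 C3 _ h12 _ h23]; first exact: struct_impl_refl.
exact: struct_impl_trans h12 h23.
Qed.

Lemma le_min_guardE (c : bool) x' x y :
  x' <= x -> (c -> x <= y) -> x' <= Order.min x (guardE c y).
Proof.
move=> x'x cxy; rewrite le_min x'x /=.
by case: c cxy => [/(_ isT)|_]; [apply: le_trans|rewrite leey].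
Qed.

Lemma dwpS_struct_impl_trans C f C' :
  wf C' -> struct_impl C' (trans C f) -> leE (dwpS C' f) (dwpS C f).
Proof.
elim: C f C' => [|x E|C1 IH1 C2 IH2|p1 C1 IH1 p2 C2 IH2|C1 IH1 p C2 IH2|phi C IH I]
  f [|y F|b1 b2|r1 b1 r2 b2|b1 p' b2|phi' b I'] //=.
- by move=> _ _ s.
- by move=> _ [-> ->] s.
- move=> [w1 w2] [h1 h2] s; apply: le_trans (IH1 _ _ w1 h1 s).
  by apply: dwpS_le => //; apply: IH2.
- move=> [cover [w1 w2]] [h1 h2 sub1 sub2] s; rewrite ge_min.
  have /orP[r1s|r2s] := cover s; apply/orP; [left|right].
  + have /andP[-> /implyP le12] := sub1 s r1s; rewrite r1s /=.
    exact: le_min_guardE (IH1 _ _ w1 h1 s) le12.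
  + have /andP[-> /implyP le21] := sub2 s r2s; rewrite r2s /= minC.
    exact: le_min_guardE (IH2 _ _ w2 h2 s) le21.
- move=> [wp [w1 w2]] [<- h1 h2] s.
  by apply: prob_comb_le => //; [exact: IH1 _ _ w1 h1 s|exact: IH2 _ _ w2 h2 s].
- by move=> _ [_ -> _] s.
Qed.

Lemma vc_struct_impl_trans C f C' :
  wf C' -> struct_impl C' (trans C f) ->
  vc (@SUPERINV R) C f -> vc (@SUPERINV R) C' f.
Proof.
elim: C f C' => [|x E|C1 IH1 C2 IH2|p1 C1 IH1 p2 C2 IH2|C1 IH1 p C2 IH2|phi C IH I]
  f [|y F|b1 b2|r1 b1 r2 b2|b1 p' b2|phi' b I'] //=.
- move=> [w1 w2] [h1 h2] [v1 v2]; split; last exact: IH2 v2.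
  apply: vc_antitone (IH1 _ _ w1 h1 v1) => //; first exact: SUPERINV_antitone.
  exact: dwpS_struct_impl_trans.
- by move=> [_ [w1 w2]] [h1 h2 _ _] [v1 v2]; split; [apply: IH1 v1|apply: IH2 v2].
- by move=> [_ [w1 w2]] [_ h1 h2] [v1 v2]; split; [apply: IH1 v1|apply: IH2 v2].
- move=> [_ w] [-> -> h] [sup v]; split; last exact: IH v.
  move=> s; apply: le_trans (sup s); apply: leeD => //; apply: lee_iversonM.
  exact: dwpS_struct_impl_trans.
Qed.

Lemma SUPERINV_preserved : preserves (@SUPERINV R).
Proof.
move=> C C' f _ w' _ v /impl_struct h.
exact: vc_struct_impl_trans h v.
Qed.

End SuperInv.

Theorem theorem6p8 (R : realType) :
  yields_upper_bounds (@SUPERINV R) /\ preserves (@SUPERINV R).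
Proof. by split; [apply: SUPERINV_upper_bounds|apply: SUPERINV_preserved]. Qed.
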